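(* Let $d=3$, $\omega=e^{2\pi i/3}$. Consider phases $\phi_{j,y}\in\mathbb{R}$ ($j,y\in\{0,1,2\}$), considered modulo $2\pi$, with $\phi_{0,y}+\phi_{1,y}+\phi_{2,y}\equiv0 \pmod{2\pi}$ for each $y$, and regard two such families as equivalent if they differ by adding a common multiple of $2\pi/3$ to all of $\phi_{0,1},\phi_{1,1},\phi_{2,1}$ and/or a common multiple of $2\pi/3$ to all of $\phi_{0,2},\phi_{1,2},\phi_{2,2}$ (equivalently, replacing $\overline{B}_1$ by $\omega^a\overline{B}_1$ and $\overline{B}_2$ by $\omega^b\overline{B}_2$). Then the system $\sum_{l=0}^{2}\exp\!\big(i\sum_{m=1}^{n}(\phi_{l\oplus m,y'}-\phi_{l\oplus m,y})\big)=3\delta_{yy'}$ for all $y,y'\in\{0,1,2\}$ and $n\in\{1,2\}$ holds if and only if, up to this equivalence and with $\phi_{0,0},\phi_{1,0}$ arbitrary and $\phi_{2,y}\equiv-\phi_{0,y}-\phi_{1,y}$, one of the following holds: (a) $\phi_{0,1}=\phi_{0,0}-2\pi/3$, $\phi_{1,1}=\phi_{1,0}$, $\phi_{0,2}=\phi_{0,0}-2\pi/3$, $\phi_{1,2}=\phi_{1,0}+2\pi/3$; (b) $\phi_{0,1}=\phi_{0,0}-2\pi/3$, $\phi_{1,1}=\phi_{1,0}+2\pi/3$, $\phi_{0,2}=\phi_{0,0}-2\pi/3$, $\phi_{1,2}=\phi_{1,0}$. In case (a) the corresponding observables are $\overline{B}_0=e^{i\phi_{0,0}}|0\rangle\langle2|+e^{i\phi_{1,0}}|1\rangle\langle0|+e^{-i(\phi_{0,0}+\phi_{1,0})}|2\rangle\langle1|$,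 $\overline{B}_1=\omega^2e^{i\phi_{0,0}}|0\rangle\langle2|+e^{i\phi_{1,0}}|1\rangle\langle0|+\omega e^{-i(\phi_{0,0}+\phi_{1,0})}|2\rangle\langle1|$, $\overline{B}_2=\omega^2e^{i\phi_{0,0}}|0\rangle\langle2|+\omega e^{i\phi_{1,0}}|1\rangle\langle0|+e^{-i(\phi_{0,0}+\phi_{1,0})}|2\rangle\langle1|$.
   Context: $\oplus$ denotes addition modulo 3. For $d=3$ the reference observables are $\overline{B}_y=\sum_{l=0}^{2}e^{i\phi_{l\oplus1,y}}|l+1\rangle\langle l|$ on $\mathbb{C}^3$ (labels mod 3). The displayed system is the orthogonality condition $\sum_{k}(\gamma^{(n)}_{y'k})^*\gamma^{(n)}_{yk}=\delta_{yy'}$ written in terms of the phases. *)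

From Stdlib Require Import Reals ZArith Arith.
From Coquelicot Require Import Coquelicot.
Open Scope R_scope.

Definition cexpi (t : R) : C := (cos t, sin t).

Definition omega : C := cexpi (2 * PI / 3).

Definition congr2pi (x y : R) : Prop := exists k : Z, x = y + 2 * PI * IZR k.

Definition oplus3 (l m : nat) : nat := ((l + m) mod 3)%nat.

(** Phases phi j y (j, y in {0,1,2}) are encoded as [phi : nat -> nat -> R];
    only the values with j, y < 3 matter. *)

Definition ortho_system (phi : nat -> nat -> R) : Prop :=
  forall (y y' n : nat), (y < 3)%nat -> (y' < 3)%nat -> (n = 1 \/ n = 2)%nat ->
    sum_n (fun l : nat =>
      cexpi (sum_n_m (fun m : nat =>
               phi (oplus3 l m) y' - phi (oplus3 l m) y) 1 n)) 2
    = (if Nat.eqb y y' then RtoC 3 else RtoC 0).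

Definition shift_phases (a b : Z) (phi : nat -> nat -> R) : nat -> nat -> R :=
  fun j y =>
    if Nat.eqb y 1 then phi j y + IZR a * (2 * PI / 3)
    else if Nat.eqb y 2 then phi j y + IZR b * (2 * PI / 3)
    else phi j y.

Definition caseA (phi : nat -> nat -> R) : Prop :=
  congr2pi (phi 0%nat 1%nat) (phi 0%nat 0%nat - 2 * PI / 3) /\
  congr2pi (phi 1%nat 1%nat) (phi 1%nat 0%nat) /\
  congr2pi (phi 0%nat 2%nat) (phi 0%nat 0%nat - 2 * PI / 3) /\
  congr2pi (phi 1%nat 2%nat) (phi 1%nat 0%nat + 2 * PI / 3).

Definition caseB (phi : nat -> nat -> R) : Prop :=
  congr2pi (phi 0%nat 1%nat) (phi 0%nat 0%nat - 2 * PI / 3) /\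
  congr2pi (phi 1%nat 1%nat) (phi 1%nat 0%nat + 2 * PI / 3) /\
  congr2pi (phi 0%nat 2%nat) (phi 0%nat 0%nat - 2 * PI / 3) /\
  congr2pi (phi 1%nat 2%nat) (phi 1%nat 0%nat).

(** Reference observables Bbar_y = sum_{l=0}^{2} e^{i phi_{l+1,y}} |l+1><l|,
    as 3x3 matrices given entrywise (row r, column c), r, c in {0,1,2}. *)
Definition Bbar (phi : nat -> nat -> R) (y : nat) (r c : nat) : C :=
  if Nat.eqb r (oplus3 c 1) then cexpi (phi r y) else RtoC 0.

Definition cyc3 (x u z : C) (r c : nat) : C :=
  match r, c with
  | 0, 2 => x
  | 1, 0 => u
  | 2, 1 => z
  | _, _ => RtoC 0
  end%nat.

From Stdlib Require Import Reals ZArith Lra Lia.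
From Coquelicot Require Import Coquelicot.
Open Scope R_scope.

(** For a pair of labels y <> y', write d_j = phi_{j,y'} - phi_{j,y} and
    z_j = exp(i d_j).  The constraint on the phases makes z_0 z_1 z_2 = 1, the
    n = 2 equation is the complex conjugate of the n = 1 equation, and the latter
    says z_0 + z_1 + z_2 = 0.  Since each conjugate is an inverse, the elementary
    symmetric functions of the z_j are then 0, 0, 1, so the z_j are the three
    distinct cube roots of unity: each d_j is an integer multiple K_j of 2 pi / 3,
    with K_0 and K_1 distinct modulo 3.  Applying this to the pairs (0,1), (0,2)
    and (1,2), whose differences are related by d^{12} = d^{02} - d^{01}, leaves
    a finite problem on residues modulo 3 with exactly two solutions up to the
    shifts by a and b: cases (a) and (b). *)

Lemma congr2pi_refl x : congr2pi x x.
Proof. exists 0%Z. ring. Qed.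

Lemma congr2pi_sym x y : congr2pi x y -> congr2pi y x.
Proof. intros [k Hk]. exists (- k)%Z. rewrite opp_IZR. lra. Qed.

Lemma congr2pi_trans x y z : congr2pi x y -> congr2pi y z -> congr2pi x z.
Proof. intros [k Hk] [l Hl]. exists (k + l)%Z. rewrite plus_IZR. lra. Qed.

Lemma congr2pi_of_diff u v u' v' : u - v = u' - v' -> congr2pi u v -> congr2pi u' v'.
Proof. intros E [k Hk]. exists k. lra. Qed.

Lemma congr2pi_sub x x' y y' :
  congr2pi x x' -> congr2pi y y' -> congr2pi (y - x) (y' - x').
Proof. intros [k Hk] [l Hl]. exists (l - k)%Z. rewrite minus_IZR. lra. Qed.

Lemma congr2pi_third x0 x1 x2 y0 y1 : congr2pi (x0 + x1 + x2) 0 ->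
  congr2pi x0 y0 -> congr2pi x1 y1 -> congr2pi x2 (- (y0 + y1)).
Proof.
  intros [k Hk] [k0 H0] [k1 H1]. exists (k - k0 - k1)%Z. rewrite !minus_IZR. lra.
Qed.

Lemma cexpi_add x y : cexpi (x + y) = (cexpi x * cexpi y)%C.
Proof. unfold cexpi, Cmult; simpl. rewrite cos_plus, sin_plus. f_equal; ring. Qed.

Lemma cexpi_opp x : cexpi (- x) = Cconj (cexpi x).
Proof. unfold cexpi, Cconj; simpl. now rewrite cos_neg, sin_neg. Qed.

Lemma cexpi_0 : cexpi 0 = 1.
Proof. unfold cexpi. now rewrite cos_0, sin_0. Qed.

Lemma cexpi_mul_conj x : (cexpi x * Cconj (cexpi x))%C = 1.
Proof. now rewrite <- cexpi_opp, <- cexpi_add, Rplus_opp_r, cexpi_0. Qed.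

Lemma congr2pi_cexpi x y : congr2pi x y <-> cexpi x = cexpi y.
Proof.
  split.
  - intros [k ->]. rewrite cexpi_add.
    assert (Hk : sin (IZR k * PI) = 0) by (apply sin_eq_0_1; now exists k).
    replace (2 * PI * IZR k) with (2 * (IZR k * PI)) by ring.
    replace (cexpi (2 * (IZR k * PI))) with (RtoC 1).
    + apply Cmult_1_r.
    + unfold cexpi, RtoC. rewrite cos_2a_sin, sin_2a, Hk. f_equal; ring.
  - unfold cexpi. intros E. injection E as Ec Es.
    assert (Hc : cos (2 * ((x - y) / 2)) = 1).
    { replace (2 * ((x - y) / 2)) with (x - y) by field.
      rewrite cos_minus, Ec, Es. pose proof (sin2_cos2 y). unfold Rsqr in *. lra. }
    rewrite cos_2a_sin in Hc.
    assert (Hs : sin ((x - y) / 2) = 0) by nra.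
    destruct (sin_eq_0_0 _ Hs) as [k Hk]. exists k. lra.
Qed.

Lemma cexpi_congr x y : congr2pi x y -> cexpi x = cexpi y.
Proof. apply congr2pi_cexpi. Qed.

Lemma Cconj_RtoC r : Cconj (RtoC r) = RtoC r.
Proof. unfold Cconj, RtoC; simpl. f_equal. ring. Qed.

Definition third_turn (K : Z) : R := IZR K * (2 * PI / 3).

Lemma third_turn_sub K L : third_turn (L - K) = third_turn L - third_turn K.
Proof. unfold third_turn. rewrite minus_IZR. ring. Qed.

Lemma congr2pi_third_turn K L :
  congr2pi (third_turn K) (third_turn L) <-> (K mod 3 = L mod 3)%Z.
Proof.
  pose proof PI_RGT_0. unfold third_turn. split.
  - intros [k Hk].
    assert (E : IZR K = IZR (L + 3 * k)).
    { rewrite plus_IZR, mult_IZR. apply Rmult_eq_reg_r with (2 * PI / 3); [|lra].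
      rewrite Hk. field. }
    apply eq_IZR in E. subst K. rewrite (Z.mul_comm 3 k). apply Z_mod_plus_full.
  - intros E. exists (K / 3 - L / 3)%Z.
    assert (HK : (K = L + 3 * (K / 3 - L / 3))%Z) by (Z.div_mod_to_equations; lia).
    rewrite HK at 1. rewrite plus_IZR, mult_IZR. field.
Qed.

Lemma congr2pi_third_turn_mod x K L :
  congr2pi x (third_turn K) -> (K mod 3 = L mod 3)%Z -> congr2pi x (third_turn L).
Proof. intros H E. eapply congr2pi_trans; [exact H|]. now apply congr2pi_third_turn. Qed.

Lemma congr2pi_third_turn_sub x y K L :
  congr2pi x (third_turn K) -> congr2pi y (third_turn L) ->
  congr2pi (y - x) (third_turn (L - K)).
Proof. rewrite third_turn_sub. apply congr2pi_sub. Qed.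

Lemma third_turn_residue_sub x y K L M :
  congr2pi x (third_turn K) -> congr2pi y (third_turn L) ->
  congr2pi (y - x) (third_turn M) -> (M mod 3 = (L - K) mod 3)%Z.
Proof.
  intros HK HL HM. apply congr2pi_third_turn. eapply congr2pi_trans.
  - apply congr2pi_sym, HM.
  - now apply congr2pi_third_turn_sub.
Qed.

Lemma third_turn_of_cexpi_cube d :
  (cexpi d * cexpi d * cexpi d)%C = 1 -> exists K, d = third_turn K.
Proof.
  rewrite <- !cexpi_add, <- cexpi_0. intros E. apply congr2pi_cexpi in E.
  destruct E as [k Hk]. exists k. unfold third_turn. lra.
Qed.

Lemma cube_roots_sum :
  (cexpi (third_turn 0) + cexpi (third_turn 1) + cexpi (third_turn 2))%C = 0.
Proof.
  unfold third_turn, cexpi, Cplus, RtoC; simpl.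
  replace (0 * (2 * PI / 3)) with 0 by ring.
  replace (1 * (2 * PI / 3)) with (2 * (PI / 3)) by field.
  replace (2 * (2 * PI / 3)) with (PI / 3 + PI) by field.
  rewrite cos_0, sin_0, cos_2PI3, sin_2PI3, neg_cos, neg_sin, cos_PI3, sin_PI3.
  f_equal; field.
Qed.

(* The conjugates are the inverses, so e2 = e3 * conj e1 = 0 and z0 is a root of
   X^3 - e1 X^2 + e2 X - e3 = X^3 - 1. *)
Lemma cube_eq1_of_unit_triple (z0 z1 z2 : C) :
  (z0 * Cconj z0 = 1 -> z1 * Cconj z1 = 1 -> z2 * Cconj z2 = 1 ->
   z0 * z1 * z2 = 1 -> z0 + z1 + z2 = 0 -> z0 * z0 * z0 = 1)%C.
Proof.
  intros U0 U1 U2 He3 He1.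
  assert (He2 : (z0 * z1 + z1 * z2 + z0 * z2 = 0)%C).
  { transitivity (z0 * z1 * z2 * Cconj (z0 + z1 + z2))%C; [|rewrite He1, Cconj_RtoC; ring].
    rewrite !Cplus_conj.
    transitivity (z1 * z2 * (z0 * Cconj z0) + z0 * z2 * (z1 * Cconj z1)
                  + z0 * z1 * (z2 * Cconj z2))%C; [|ring].
    rewrite U0, U1, U2. ring. }
  transitivity ((z0 + z1 + z2) * (z0 * z0) - (z0 * z1 + z1 * z2 + z0 * z2) * z0
                + z0 * z1 * z2)%C; [ring|].
  rewrite He1, He2, He3. ring.
Qed.

Definition tri_sum (d : nat -> R) : C :=
  (cexpi (d 0%nat) + cexpi (d 1%nat) + cexpi (d 2%nat))%C.

Definition distinct_third_turns (d : nat -> R) : Prop :=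
  exists K0 K1 : Z, congr2pi (d 0%nat) (third_turn K0) /\
    congr2pi (d 1%nat) (third_turn K1) /\ (K0 mod 3 <> K1 mod 3)%Z.

Lemma distinct_third_turns_of_tri_sum d :
  congr2pi (d 0%nat + d 1%nat + d 2%nat) 0 -> tri_sum d = 0 -> distinct_third_turns d.
Proof.
  unfold tri_sum. intros Hd He1.
  assert (He3 : (cexpi (d 0%nat) * cexpi (d 1%nat) * cexpi (d 2%nat))%C = 1).
  { rewrite <- !cexpi_add, <- cexpi_0. now apply cexpi_congr. }
  set (z0 := cexpi (d 0%nat)) in *; set (z1 := cexpi (d 1%nat)) in *;
    set (z2 := cexpi (d 2%nat)) in *.
  assert (C0 : (z0 * z0 * z0)%C = 1) by (apply (cube_eq1_of_unit_triple z0 z1 z2);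
    solve [apply cexpi_mul_conj | assumption]).
  assert (C1 : (z1 * z1 * z1)%C = 1).
  { apply (cube_eq1_of_unit_triple z1 z0 z2); try apply cexpi_mul_conj;
      [rewrite <- He3 | rewrite <- He1]; ring. }
  destruct (third_turn_of_cexpi_cube _ C0) as [K0 HK0].
  destruct (third_turn_of_cexpi_cube _ C1) as [K1 HK1].
  exists K0, K1. rewrite HK0, HK1. split; [|split]; try apply congr2pi_refl.
  (* equal residues would give z1 = z0 and z2 = -2 z0, hence e3 = -2 z0^3 = -2 *)
  intros HK. assert (E10 : z1 = z0).
  { unfold z0, z1. rewrite HK0, HK1. apply cexpi_congr, congr2pi_third_turn. easy. }
  assert (E2 : z2 = (- (z0 + z0))%C).
  { replace z2 with (z0 + z1 + z2 - (z0 + z1))%C by ring. rewrite He1, E10. ring. }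
  assert (Habs : @eq C 1 (- (1 + 1) * (z0 * z0 * z0))%C).
  { rewrite <- He3 at 1. rewrite E10, E2. ring. }
  rewrite C0 in Habs. apply (f_equal fst) in Habs. simpl in Habs. lra.
Qed.

Lemma tri_sum_of_distinct_third_turns d :
  congr2pi (d 0%nat + d 1%nat + d 2%nat) 0 -> distinct_third_turns d -> tri_sum d = 0.
Proof.
  intros Hd (K0 & K1 & H0 & H1 & HK).
  assert (H2 : congr2pi (d 2%nat) (third_turn (- K0 - K1))).
  { replace (third_turn (- K0 - K1)) with (- (third_turn K0 + third_turn K1))
      by (unfold third_turn; rewrite minus_IZR, opp_IZR; ring).
    now apply (congr2pi_third _ _ _ _ _ Hd). }
  assert (Hmod : forall K, cexpi (third_turn K) = cexpi (third_turn (K mod 3))).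
  { intros K. apply cexpi_congr, congr2pi_third_turn. now rewrite Zmod_mod. }
  unfold tri_sum. rewrite (cexpi_congr _ _ H0), (cexpi_congr _ _ H1), (cexpi_congr _ _ H2),
    (Hmod K0), (Hmod K1), (Hmod (- K0 - K1)%Z).
  assert (Hr : (K0 mod 3 <> (- K0 - K1) mod 3 /\ K1 mod 3 <> (- K0 - K1) mod 3)%Z)
    by (Z.div_mod_to_equations; lia).
  pose proof (Z.mod_pos_bound K0 3) as R0; pose proof (Z.mod_pos_bound K1 3) as R1;
    pose proof (Z.mod_pos_bound (- K0 - K1) 3) as R2.
  set (r0 := (K0 mod 3)%Z) in *; set (r1 := (K1 mod 3)%Z) in *;
    set (r2 := ((- K0 - K1) mod 3)%Z) in *; clearbody r0 r1 r2.
  (* the residues are 0, 1, 2 in some order *)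
  assert (r0 = 0 \/ r0 = 1 \/ r0 = 2)%Z as [-> | [-> | ->]] by lia;
  assert (r1 = 0 \/ r1 = 1 \/ r1 = 2)%Z as [-> | [-> | ->]] by lia;
  assert (r2 = 0 \/ r2 = 1 \/ r2 = 2)%Z as [-> | [-> | ->]] by lia;
  try lia; rewrite <- cube_roots_sum; ring.
Qed.

Lemma tri_sum_eq0_iff d : congr2pi (d 0%nat + d 1%nat + d 2%nat) 0 ->
  tri_sum d = 0 <-> distinct_third_turns d.
Proof.
  split; [apply distinct_third_turns_of_tri_sum | apply tri_sum_of_distinct_third_turns];
    assumption.
Qed.

Definition phase_diff (phi : nat -> nat -> R) (y y' j : nat) : R := phi j y' - phi j y.

Lemma phase_diff_1_2 phi j : phase_diff phi 1 2 j = phase_diff phi 0 2 j - phase_diff phi 0 1 j.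
Proof. unfold phase_diff. ring. Qed.

Lemma phase_diff_sum phi y y' :
  congr2pi (phi 0%nat y + phi 1%nat y + phi 2%nat y) 0 ->
  congr2pi (phi 0%nat y' + phi 1%nat y' + phi 2%nat y') 0 ->
  congr2pi (phase_diff phi y y' 0 + phase_diff phi y y' 1 + phase_diff phi y y' 2) 0.
Proof.
  intros Hy Hy'. replace 0 with (0 - 0) by ring.
  refine (congr2pi_of_diff _ _ _ _ _ (congr2pi_sub _ _ _ _ Hy Hy')).
  unfold phase_diff. ring.
Qed.

Lemma tri_sum_phase_diff_swap phi y y' :
  tri_sum (phase_diff phi y' y) = Cconj (tri_sum (phase_diff phi y y')).
Proof.
  unfold tri_sum, phase_diff. rewrite !Cplus_conj, <- !cexpi_opp.
  repeat f_equal; ring.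
Qed.

Lemma tri_sum_phase_diff_diag phi y : tri_sum (phase_diff phi y y) = 3.
Proof.
  unfold tri_sum, phase_diff. rewrite !Rminus_diag, cexpi_0.
  unfold RtoC, Cplus; simpl. f_equal; ring.
Qed.

Lemma sum_n_upto2 (f : nat -> C) : sum_n f 2 = (f 0%nat + f 1%nat + f 2%nat)%C.
Proof. rewrite !sum_Sn, sum_O. reflexivity. Qed.

Lemma sum_n_m_1_2 (g : nat -> R) : sum_n_m g 1 2 = g 1%nat + g 2%nat.
Proof. rewrite sum_n_Sm by lia. rewrite sum_n_n. reflexivity. Qed.

Lemma ortho_sum_1 phi y y' :
  sum_n (fun l => cexpi (sum_n_m (fun m =>
     phi (oplus3 l m) y' - phi (oplus3 l m) y) 1 1)) 2 = tri_sum (phase_diff phi y y').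
Proof. rewrite sum_n_upto2, !sum_n_n. unfold tri_sum, phase_diff, oplus3. simpl. ring. Qed.

Lemma cexpi_pairs_of_sum x y z : congr2pi (x + y + z) 0 ->
  cexpi (y + z) = cexpi (- x) /\ cexpi (z + x) = cexpi (- y) /\ cexpi (x + y) = cexpi (- z).
Proof. intros [k Hk]. repeat split; apply cexpi_congr; exists k; lra. Qed.

Lemma ortho_sum_2 phi y y' :
  congr2pi (phase_diff phi y y' 0 + phase_diff phi y y' 1 + phase_diff phi y y' 2) 0 ->
  sum_n (fun l => cexpi (sum_n_m (fun m =>
     phi (oplus3 l m) y' - phi (oplus3 l m) y) 1 2)) 2
  = Cconj (tri_sum (phase_diff phi y y')).
Proof.
  intros Hd. destruct (cexpi_pairs_of_sum _ _ _ Hd) as (E0 & E1 & E2).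
  rewrite sum_n_upto2, !sum_n_m_1_2. unfold tri_sum. rewrite !Cplus_conj, <- !cexpi_opp.
  unfold phase_diff, oplus3 in *. simpl. rewrite E0, E1, E2. ring.
Qed.

Lemma ortho_system_iff_pairs phi
  (Hsum : forall y : nat, (y < 3)%nat ->
            congr2pi (phi 0%nat y + phi 1%nat y + phi 2%nat y) 0) :
  ortho_system phi <->
  tri_sum (phase_diff phi 0 1) = 0 /\ tri_sum (phase_diff phi 0 2) = 0 /\
  tri_sum (phase_diff phi 1 2) = 0.
Proof.
  unfold ortho_system. split.
  - intros H.
    assert (Hpair : forall y y', (y < 3)%nat -> (y' < 3)%nat -> Nat.eqb y y' = false ->
              tri_sum (phase_diff phi y y') = 0).
    { intros y y' Hy Hy' Hne. rewrite <- ortho_sum_1, (H y y' 1%nat Hy Hy' (or_introl eq_refl)).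
      now rewrite Hne. }
    repeat split; apply Hpair; auto.
  - intros (H01 & H02 & H12).
    assert (Hpair : forall y y', (y < 3)%nat -> (y' < 3)%nat -> y <> y' ->
              tri_sum (phase_diff phi y y') = 0).
    { intros y y' Hy Hy' Hne.
      destruct y as [|[|[|]]], y' as [|[|[|]]]; try lia; try assumption;
        rewrite tri_sum_phase_diff_swap, ?H01, ?H02, ?H12; apply Cconj_RtoC. }
    intros y y' n Hy Hy' Hn.
    destruct Hn as [-> | ->];
      [rewrite ortho_sum_1 | rewrite ortho_sum_2 by (apply phase_diff_sum; auto)];
      destruct (Nat.eqb_spec y y') as [<- | Hne];
      rewrite ?tri_sum_phase_diff_diag, ?Hpair, ?Cconj_RtoC by assumption; reflexivity.
Qed.

(* Up to the shifts by a and b, case (a) is (eA, eB) = (1, 2) and case (b) is (2, 1). *)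
Definition shifted_residues (phi : nat -> nat -> R) (a b eA eB : Z) : Prop :=
  congr2pi (phase_diff phi 0 1 0) (third_turn (-1 - a)) /\
  congr2pi (phase_diff phi 0 1 1) (third_turn (eA - 1 - a)) /\
  congr2pi (phase_diff phi 0 2 0) (third_turn (-1 - b)) /\
  congr2pi (phase_diff phi 0 2 1) (third_turn (eB - 1 - b)).

Lemma caseA_shift_iff a b phi :
  caseA (shift_phases a b phi) <-> shifted_residues phi a b 1 2.
Proof.
  unfold caseA, shifted_residues, shift_phases, phase_diff, third_turn; cbn [Nat.eqb].
  split; intros (H1 & H2 & H3 & H4); repeat split;
    [revert H1 | revert H2 | revert H3 | revert H4
    |revert H1 | revert H2 | revert H3 | revert H4];
    apply congr2pi_of_diff; rewrite ?minus_IZR; ring.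
Qed.

Lemma caseB_shift_iff a b phi :
  caseB (shift_phases a b phi) <-> shifted_residues phi a b 2 1.
Proof.
  unfold caseB, shifted_residues, shift_phases, phase_diff, third_turn; cbn [Nat.eqb].
  split; intros (H1 & H2 & H3 & H4); repeat split;
    [revert H1 | revert H2 | revert H3 | revert H4
    |revert H1 | revert H2 | revert H3 | revert H4];
    apply congr2pi_of_diff; rewrite ?minus_IZR; ring.
Qed.

Lemma distinct_third_turns_of_residues phi a b eA eB :
  (eA mod 3 <> 0 /\ eB mod 3 <> 0 /\ (eB - eA) mod 3 <> 0)%Z ->
  shifted_residues phi a b eA eB ->
  distinct_third_turns (phase_diff phi 0 1) /\ distinct_third_turns (phase_diff phi 0 2) /\
  distinct_third_turns (phase_diff phi 1 2).
Proof.
  intros He (HA0 & HA1 & HB0 & HB1). repeat split.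
  - exists (-1 - a)%Z, (eA - 1 - a)%Z. repeat split; try assumption.
    Z.div_mod_to_equations; lia.
  - exists (-1 - b)%Z, (eB - 1 - b)%Z. repeat split; try assumption.
    Z.div_mod_to_equations; lia.
  - exists (-1 - b - (-1 - a))%Z, (eB - 1 - b - (eA - 1 - a))%Z.
    rewrite !phase_diff_1_2. repeat split; try now apply congr2pi_third_turn_sub.
    Z.div_mod_to_equations; lia.
Qed.

Lemma residues_of_distinct_third_turns phi :
  distinct_third_turns (phase_diff phi 0 1) -> distinct_third_turns (phase_diff phi 0 2) ->
  distinct_third_turns (phase_diff phi 1 2) ->
  exists a b, shifted_residues phi a b 1 2 \/ shifted_residues phi a b 2 1.
Proof.
  intros (K0 & K1 & HA0 & HA1 & HK) (L0 & L1 & HB0 & HB1 & HL) (M0 & M1 & HC0 & HC1 & HM).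
  rewrite phase_diff_1_2 in HC0, HC1.
  pose proof (third_turn_residue_sub _ _ _ _ _ HA0 HB0 HC0) as EM0.
  pose proof (third_turn_residue_sub _ _ _ _ _ HA1 HB1 HC1) as EM1.
  exists (-1 - K0)%Z, (-1 - L0)%Z.
  assert (Hcases : ((K1 - K0) mod 3 = 1 /\ (L1 - L0) mod 3 = 2 \/
                    (K1 - K0) mod 3 = 2 /\ (L1 - L0) mod 3 = 1)%Z)
    by (Z.div_mod_to_equations; lia).
  destruct Hcases as [[E1 E2] | [E1 E2]]; [left | right]; repeat split;
    (eapply congr2pi_third_turn_mod; [eassumption | Z.div_mod_to_equations; lia]).
Qed.

Lemma Bbar_cyc3 phi y r c : (r < 3)%nat -> (c < 3)%nat ->
  Bbar phi y r c = cyc3 (cexpi (phi 0%nat y)) (cexpi (phi 1%nat y)) (cexpi (phi 2%nat y)) r c.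
Proof.
  intros Hr Hc. destruct r as [|[|[|]]], c as [|[|[|]]]; try lia; reflexivity.
Qed.

Lemma cexpi_shifted_third x0 x1 x2 a y0 y1 : congr2pi (x0 + x1 + x2) 0 ->
  congr2pi (x0 + third_turn a) y0 -> congr2pi (x1 + third_turn a) y1 ->
  cexpi (x2 + third_turn a) = cexpi (- (y0 + y1)).
Proof.
  intros Hx H0 H1. apply cexpi_congr. refine (congr2pi_third _ _ _ _ _ _ H0 H1).
  (* three shifts by the same third turn add up to a whole number of turns *)
  destruct Hx as [k Hk]. exists (k + a)%Z. unfold third_turn. rewrite plus_IZR. lra.
Qed.

Lemma cexpi_add_third x : cexpi (2 * PI / 3 + x) = (omega * cexpi x)%C.
Proof. apply cexpi_add. Qed.

Lemma cexpi_sub_third x : cexpi (x - 2 * PI / 3) = (omega * omega * cexpi x)%C.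
Proof. unfold omega. rewrite <- !cexpi_add. apply cexpi_congr. exists (-1)%Z. lra. Qed.

Lemma caseA_Bbar phi a b
  (Hsum : forall y : nat, (y < 3)%nat ->
            congr2pi (phi 0%nat y + phi 1%nat y + phi 2%nat y) 0) :
  caseA (shift_phases a b phi) ->
  let p00 := phi 0%nat 0%nat in
  let p10 := phi 1%nat 0%nat in
  forall r c : nat, (r < 3)%nat -> (c < 3)%nat ->
    Bbar (shift_phases a b phi) 0 r c
      = cyc3 (cexpi p00) (cexpi p10) (cexpi (- (p00 + p10))) r c /\
    Bbar (shift_phases a b phi) 1 r c
      = cyc3 (Cmult (Cmult omega omega) (cexpi p00)) (cexpi p10)
             (Cmult omega (cexpi (- (p00 + p10)))) r c /\
    Bbar (shift_phases a b phi) 2 r c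
      = cyc3 (Cmult (Cmult omega omega) (cexpi p00)) (Cmult omega (cexpi p10))
             (cexpi (- (p00 + p10))) r c.
Proof.
  intros HA p00 p10 r c Hr Hc. rewrite !Bbar_cyc3 by assumption.
  unfold caseA in HA. unfold shift_phases in *. cbn [Nat.eqb] in *.
  destruct HA as (H01 & H11 & H02 & H12). fold (third_turn a) (third_turn b) in *.
  assert (H20 : cexpi (phi 2%nat 0%nat) = cexpi (- (p00 + p10))).
  { apply cexpi_congr. destruct (Hsum 0%nat) as [k Hk]; [lia|].
    exists k. unfold p00, p10. lra. }
  rewrite (cexpi_shifted_third _ _ _ _ _ _ (Hsum 1%nat ltac:(lia)) H01 H11),
    (cexpi_shifted_third _ _ _ _ _ _ (Hsum 2%nat ltac:(lia)) H02 H12),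
    (cexpi_congr _ _ H01), (cexpi_congr _ _ H11), (cexpi_congr _ _ H02),
    (cexpi_congr _ _ H12), H20.
  change (phi 0%nat 0%nat) with p00. change (phi 1%nat 0%nat) with p10.
  replace (- (p00 - 2 * PI / 3 + p10)) with (2 * PI / 3 + - (p00 + p10)) by ring.
  replace (- (p00 - 2 * PI / 3 + (p10 + 2 * PI / 3))) with (- (p00 + p10)) by ring.
  rewrite cexpi_sub_third, (Rplus_comm p10), !cexpi_add_third. repeat split.
Qed.

Theorem mainTheorem10 (phi : nat -> nat -> R)
  (Hsum : forall y : nat, (y < 3)%nat ->
            congr2pi (phi 0%nat y + phi 1%nat y + phi 2%nat y) 0) :
  (ortho_system phi <->
     exists a b : Z,
       caseA (shift_phases a b phi) \/ caseB (shift_phases a b phi))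
  /\
  (forall a b : Z, caseA (shift_phases a b phi) ->
     let p00 := phi 0%nat 0%nat in
     let p10 := phi 1%nat 0%nat in
     forall r c : nat, (r < 3)%nat -> (c < 3)%nat ->
       Bbar (shift_phases a b phi) 0 r c
         = cyc3 (cexpi p00) (cexpi p10) (cexpi (- (p00 + p10))) r c /\
       Bbar (shift_phases a b phi) 1 r c
         = cyc3 (Cmult (Cmult omega omega) (cexpi p00)) (cexpi p10)
                (Cmult omega (cexpi (- (p00 + p10)))) r c /\
       Bbar (shift_phases a b phi) 2 r c
         = cyc3 (Cmult (Cmult omega omega) (cexpi p00)) (Cmult omega (cexpi p10))
                (cexpi (- (p00 + p10))) r c).
Proof.
  split.
  - rewrite ortho_system_iff_pairs by exact Hsum.
    rewrite !tri_sum_eq0_iff by (apply phase_diff_sum; apply Hsum; lia).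
    split.
    + intros (H01 & H02 & H12).
      destruct (residues_of_distinct_third_turns phi H01 H02 H12) as (a & b & [H | H]);
        exists a, b; [left; apply caseA_shift_iff | right; apply caseB_shift_iff]; exact H.
    + intros (a & b & [H | H]); eapply distinct_third_turns_of_residues;
        [| apply caseA_shift_iff, H | | apply caseB_shift_iff, H]; easy.
  - intros a b. apply caseA_Bbar, Hsum.
Qed.
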